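(* Let $\mathcal{D}\subset\mathbb{R}^2$ be open and bounded, $\mathcal{K}=\{0,1,2\}$, $\boldsymbol{\phi}=(\phi_0,\phi_1,\phi_2)\in\mathcal{C}^\infty(\mathbb{R}^2,\mathbb{R}^3)$ with $\phi_0\equiv0$. Let $\hat x\in\mathcal{E}_{\mathcal{K}}(\boldsymbol{\phi})$ and assume $D\widehat{\boldsymbol{\phi}}_{\mathcal{K}}(\hat x)$ is invertible. Then, with the angles $\beta_0,\beta_1,\beta_2$ at $\hat x$ defined below, $\max_{k\in\mathcal{K}}\beta_k<\pi$ and $\min_{k\in\mathcal{K}}\beta_k>0$.
   Context: For $j\in\mathcal{K}$, $\Omega_j(\boldsymbol{\phi})=\operatorname{int}\{x\in\mathcal{D}\mid\phi_j(x)\le\phi_m(x)\ \forall m\ne j\}$; for $\mathcal{I}\subset\mathcal{K}$, $\mathcal{E}_{\mathcal{I}}(\boldsymbol{\phi})=\bigcap_{j\in\mathcal{I}}\partial\Omega_j(\boldsymbol{\phi})$; $\widehat{\boldsymbol{\phi}}_{\mathcal{K}}=(\phi_0-\phi_1,\phi_0-\phi_2)$. For $\mathcal{I}\in\{\{0,1\},\{1,2\},\{0,2\}\}$, $\mathbb{D}_{\mathcal{I}}$ denotes the half-tangent to the curve $\mathcal{E}_{\mathcal{I}}(\boldsymbol{\phi})$ at the triple point $\hat x$. Using polar coordinates centered at $\hat x$ with angle $\vartheta\in[0,2\pi]$, $\vartheta=0$ along $\mathbb{D}_{\{0,2\}}$, let $\vartheta_0$ be the angle of $\mathbb{D}_{\{0,1\}}$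 and $\vartheta_1$ that of $\mathbb{D}_{\{1,2\}}$, where the labels of $\phi_0$ and $\phi_2$ (and of the corresponding phases) are exchanged if necessary so that $\vartheta_0\le\vartheta_1$. Then $\beta_0=\vartheta_0$, $\beta_1=\vartheta_1-\vartheta_0$, $\beta_2=2\pi-\vartheta_1$ (so $\beta_0+\beta_1+\beta_2=2\pi$). *)

From HB Require Import structures.
From mathcomp Require Import all_boot all_order all_algebra.
From mathcomp Require Import all_classical all_reals all_analysis.
Set Implicit Arguments. Unset Strict Implicit. Unset Printing Implicit Defensive.
Import Order.TTheory GRing.Theory Num.Theory.
Import numFieldNormedType.Exports.
Local Open Scope classical_set_scope.
Local Open Scope ring_scope.

Section Defs.
Variable R : realType.

Fixpoint Ck (k : nat) (f : R * R -> R) : Prop :=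
  match k with
  | 0 => continuous f
  | k'.+1 => (forall x, differentiable f x) /\
             forall v : R * R, Ck k' (fun x => 'D_v f x)
  end.

Definition smooth (f : R * R -> R) : Prop := forall k, Ck k f.

Definition Omega (D : set (R * R)) (phi : 'I_3 -> R * R -> R) (j : 'I_3)
  : set (R * R) :=
  interior [set x | D x /\ forall m : 'I_3, m != j -> phi j x <= phi m x].

Definition bdry (A : set (R * R)) : set (R * R) := closure A `\` interior A.

Definition Eset (D : set (R * R)) (phi : 'I_3 -> R * R -> R) (I : set 'I_3)
  : set (R * R) :=
  [set x | forall j, I j -> bdry (Omega D phi j) x].

Definition phihat (phi : 'I_3 -> R * R -> R) : R * R -> R * R :=
  fun x => (phi 0 x - phi 1 x, phi 0 x - phi 2 x).

Definition eucl (v : R * R) : R := Num.sqrt (v.1 ^+ 2 + v.2 ^+ 2).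

Definition half_tangent (S : set (R * R)) (x d : R * R) : Prop :=
  limit_point S x /\
  (fun y : R * R => ((y.1 - x.1) / eucl (y - x), (y.2 - x.2) / eucl (y - x)))
    @ within (S `\ x) (nbhs x) --> d.

(* theta in [0, 2 pi) is the counterclockwise polar angle of the direction d
   measured from the reference direction e (d = rotation of e by theta). *)
Definition ccw_angle (e d : R * R) (theta : R) : Prop :=
  0 <= theta < 2 * pi /\
  d = (cos theta * e.1 - sin theta * e.2, sin theta * e.1 + cos theta * e.2).

End Defs.

From HB Require Import structures.
From mathcomp Require Import all_boot all_order all_algebra.
From mathcomp Require Import all_classical all_reals all_analysis.
From mathcomp Require Import lra ring.
Import Order.TTheory GRing.Theory Num.Theory.
Import numFieldNormedType.Exports.
Local Open Scope classical_set_scope.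
Local Open Scope ring_scope.

(* At the triple point phi_1 = phi_2 = 0, and the three interfaces
   are {phi_1 = 0 <= phi_2}, {phi_2 = 0 <= phi_1} and {phi_1 = phi_2 <= 0}.
   A function that is constant (resp. minimal) at xhat along a set has zero
   (resp. nonnegative) derivative along each half-tangent of the set, so with
   L_k = D phi_k(xhat) we get L_1 d01 = 0 <= L_2 d01, L_2 d02 = 0 <= L_1 d02
   and L_1 d12 = L_2 d12 <= 0; the inequalities are strict because (L_1, L_2)
   is invertible and half-tangents are nonzero.  Writing L_1 u L_2 v - L_1 v L_2 u
   = det(L_1, L_2) (u x v), the three cross products d02 x d01, d01 x d12 and
   d12 x d02, i.e. the sines of the three sector angles, all have the sign of
   the determinant, which puts each sector angle in (0, pi). *)

Section PlaneGeometry.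
Context {R : realType}.
Implicit Types (u v e : R * R) (L : {linear (R * R)%type -> R}).

Lemma eucl_gt0 v : v != 0 -> 0 < eucl v.
Proof.
case: v => a b /= v_neq0; rewrite /eucl /= sqrtr_gt0 lt_neqAle.
rewrite addr_ge0 ?sqr_ge0 // andbT eq_sym paddr_eq0 ?sqr_ge0 // !sqrf_eq0.
by apply: contra v_neq0 => /andP[/eqP -> /eqP ->].
Qed.

Lemma normr_le_eucl v : `|v| <= eucl v.
Proof.
case: v => a b; rewrite prod_normE /eucl /= ge_max.
by rewrite -(sqrtr_sqr a) -(sqrtr_sqr b) !ler_wsqrtr ?lerDl ?lerDr ?sqr_ge0.
Qed.

Definition unit_chord (x y : R * R) : R * R :=
  ((y.1 - x.1) / eucl (y - x), (y.2 - x.2) / eucl (y - x)).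

Lemma sub_unit_chord {x y : R * R} : y != x -> y - x = eucl (y - x) *: unit_chord x y.
Proof.
rewrite -subr_eq0 => /eucl_gt0/lt0r_neq0 n_neq0.
by congr (_, _); rewrite -[_ *: _]/(_ * _) mulrC divfK.
Qed.

Definition cross u v : R := u.1 * v.2 - u.2 * v.1.

Definition linear_det L1 L2 : R := L1 (1, 0) * L2 (0, 1) - L1 (0, 1) * L2 (1, 0).

Lemma linear_cross L1 L2 u v :
  L1 u * L2 v - L1 v * L2 u = linear_det L1 L2 * cross u v.
Proof.
have decomp w : w = w.1 *: ((1, 0) : R * R) + w.2 *: (0, 1).
  by case: w => a b; congr (_, _); rewrite /= -![_ *: _]/(_ * _); ring.
rewrite [u]decomp [v]decomp !linearD !linearZ /linear_det /cross /=.
rewrite -![_ *: _]/(_ * _).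
ring.
Qed.

Lemma ccw_angle0 e : ccw_angle e e 0.
Proof.
split; first by rewrite lexx mulr_gt0 ?pi_gt0.
by case: e => a b; rewrite /= cos0 sin0 !mul1r !mul0r subr0 add0r.
Qed.

Lemma cross_ccw_angle {e d d' : R * R} {t t' : R} :
  ccw_angle e d t -> ccw_angle e d' t' ->
  cross d d' = sin (t' - t) * (e.1 ^+ 2 + e.2 ^+ 2).
Proof. by move=> [_ ->] [_ ->]; rewrite /cross sinB /=; ring. Qed.

End PlaneGeometry.

Section HalfTangent.
Context {R : realType}.
Implicit Types (S : set (R * R)) (x d : R * R) (f : R * R -> R).

Lemma diff_remainder_near {V : normedModType R} (f : V -> R) (x : V) (e : R) :
  differentiable f x -> 0 < e ->
  \forall y \near x, `|f y - f x - 'd f x (y - x)| <= e * `|y - x|.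
Proof.
move=> /diff_locally/eqaddoP small e_gt0.
rewrite (near_shift 0 x); near=> h; rewrite /= subr0 addrK.
near: h; apply: filterS (small e e_gt0) => h /=.
by rewrite opprD addrA.
Unshelve. all: by end_near.
Qed.

Lemma half_tangent_diff_ge0 {S x d f} :
  differentiable f x -> half_tangent S x d ->
  (forall y, S y -> f x <= f y) -> 0 <= 'd f x d.
Proof.
move=> df [Sx chord_d] f_ge; rewrite leNgt; apply/negP => Ld_lt0.
set L := 'd f x.
have chord_d' : unit_chord x @ within (S `\ x) (nbhs x) --> d := chord_d.
have near_chord : \forall y \near x, (S `\ x) y -> L (unit_chord x y) < L d / 2.
  have : \forall y \near within (S `\ x) (nbhs x), L (unit_chord x y) < L d / 2.
    apply: (cvgr_lt (L d)); last by lra.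
    by apply: cvg_comp chord_d' _; exact: diff_continuous.
  by rewrite near_withinE.
have near_rem := @diff_remainder_near _ f x (- L d / 4) df.
have [y [y_neq_x Sy [Lchord rem]]] :=
  Sx _ (filterI near_chord (near_rem ltac:(lra))).
have {}Lchord : L (unit_chord x y) < L d / 2.
  by apply: Lchord; split=> // /= y_eq; rewrite y_eq eqxx in y_neq_x.
set n := eucl (y - x) in rem.
have n_gt0 : 0 < n by apply: eucl_gt0; rewrite subr_eq0.
have Lyx : L (y - x) = n * L (unit_chord x y).
  by rewrite {1}(sub_unit_chord y_neq_x) linearZ.
have rem_le : f y - f x - L (y - x) <= - L d / 4 * n.
  apply: le_trans (ler_norm _) (le_trans rem _).
  by rewrite ler_pM2l ?normr_le_eucl //; lra.
have := f_ge y Sy; have : n * L (unit_chord x y) < n * (L d / 2) by rewrite ltr_pM2l.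
have : 0 < n * - L d by rewrite mulr_gt0 ?oppr_gt0.
rewrite Lyx in rem_le; lra.
Qed.

Lemma half_tangent_diff_le0 {S x d f} :
  differentiable f x -> half_tangent S x d ->
  (forall y, S y -> f y <= f x) -> 'd f x d <= 0.
Proof.
move=> df Sd f_le.
have := half_tangent_diff_ge0 (differentiableN df) Sd.
rewrite diffN // /= oppr_ge0; apply=> y Sy /=.
by rewrite lerN2 f_le.
Qed.

Lemma half_tangent_diff_eq0 {S x d f} :
  differentiable f x -> half_tangent S x d ->
  (forall y, S y -> f y = f x) -> 'd f x d = 0.
Proof.
move=> df Sd f_eq; apply/eqP; rewrite eq_le.
rewrite (half_tangent_diff_le0 df Sd) ?(half_tangent_diff_ge0 df Sd) //.
- by move=> y /f_eq ->.
- by move=> y /f_eq ->.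
Qed.

Lemma half_tangent_unit {S x d} : half_tangent S x d -> d.1 ^+ 2 + d.2 ^+ 2 = 1.
Proof.
move=> [Sx chord_d].
have PF : ProperFilter (within (S `\ x) (nbhs x)).
  apply: within_nbhs_proper => B /Sx [y [y_neq_x Sy By]].
  by exists y; split=> //; split=> // /= y_eq; rewrite y_eq eqxx in y_neq_x.
pose sq (v : R * R) := v.1 ^+ 2 + v.2 ^+ 2.
have sq_closed : closed (sq @^-1` [set 1]).
  apply: preimage_closed; last exact: closed_eq.
  move=> v _; apply: cvgD; rewrite expr2; apply: cvgM;
    (apply: cvg_fst || apply: cvg_snd).
have chord_d' : unit_chord x @ within (S `\ x) (nbhs x) --> d := chord_d.
apply: (@closed_cvg _ _ _ PF _ _ sq_closed _ _ chord_d'); rewrite near_withinE.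
near=> y => -[_ /= y_neq_x].
have n_gt0 : 0 < eucl (y - x) by apply: eucl_gt0; rewrite subr_eq0; apply/eqP.
rewrite /sq /unit_chord /= !expr_div_n -mulrDl /eucl sqr_sqrtr ?divff //.
  by rewrite gt_eqF // -sqrtr_gt0.
by rewrite addr_ge0 ?sqr_ge0.
Unshelve. all: by end_near.
Qed.

Lemma half_tangent_neq0 {S x d} : half_tangent S x d -> d != 0.
Proof.
move/half_tangent_unit; apply: contraPneq => ->.
by rewrite /= expr0n addr0 => /eqP; rewrite eq_sym oner_eq0.
Qed.

End HalfTangent.

Section Phases.
Context {R : realType}.
Context {D : set (R * R)} {phi : 'I_3 -> R * R -> R}.
Hypothesis phi_cont : forall k, continuous (phi k).
Implicit Types (I : set 'I_3) (y : R * R).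

Lemma closure_Omega_le j m y :
  m != j -> closure (Omega D phi j) y -> phi j y <= phi m y.
Proof.
move=> m_neq_j.
have ge_closed : closed ((fun z => phi m z - phi j z) @^-1` [set r | 0 <= r]).
  apply: preimage_closed; last exact: closed_ge.
  by move=> z _; apply: cvgB; apply: phi_cont.
have sub : Omega D phi j `<=` (fun z => phi m z - phi j z) @^-1` [set r | 0 <= r].
  by move=> z /interior_subset [_ le_m] /=; rewrite subr_ge0 le_m.
by move/(closureS sub); rewrite -(closure_id _).1 //= subr_ge0.
Qed.

Lemma Eset_le {I y j m} : Eset D phi I y -> I j -> m != j -> phi j y <= phi m y.
Proof. by move=> Ey Ij m_neq_j; case: (Ey j Ij) => cl _; apply: closure_Omega_le. Qed.

Lemma Eset_eq {I y j m} : Eset D phi I y -> I j -> I m -> phi j y = phi m y.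
Proof.
move=> Ey Ij Im; have [-> //|m_neq_j] := eqVneq m j.
by apply/eqP; rewrite eq_le !(Eset_le Ey) // eq_sym.
Qed.

Hypothesis phi0 : phi 0 = (fun _ => 0).

Lemma Eset_triple_eq0 {y} k : Eset D phi setT y -> phi k y = 0.
Proof. by move=> Ey; rewrite (Eset_eq Ey (_ : setT k) (_ : setT 0)) ?phi0. Qed.

Lemma Eset01_phi y : Eset D phi [set 0; 1] y -> phi 1 y = 0 /\ 0 <= phi 2 y.
Proof.
move=> Ey; rewrite -[0](congr1 (fun g => g y) phi0).
by split; [apply: (Eset_eq Ey); [right|left] | apply: (Eset_le Ey); [left|]].
Qed.

Lemma Eset02_phi y : Eset D phi [set 0; 2] y -> phi 2 y = 0 /\ 0 <= phi 1 y.
Proof.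
move=> Ey; rewrite -[0](congr1 (fun g => g y) phi0).
by split; [apply: (Eset_eq Ey); [right|left] | apply: (Eset_le Ey); [left|]].
Qed.

Lemma Eset12_phi y : Eset D phi [set 1; 2] y -> phi 1 y = phi 2 y /\ phi 1 y <= 0.
Proof.
move=> Ey; rewrite -[0](congr1 (fun g => g y) phi0).
by split; [apply: (Eset_eq Ey); [left|right] | apply: (Eset_le Ey); [left|]].
Qed.

End Phases.

Section TriplePoint.
Context {R : realType}.
Context {D : set (R * R)} {phi : 'I_3 -> R * R -> R} {xhat d01 d12 d02 : R * R}.
Hypotheses (phi_cont : forall k, continuous (phi k))
  (phi_diff : forall k, differentiable (phi k) xhat)
  (phi0 : phi 0 = (fun _ => 0)) (triple : Eset D phi setT xhat)
  (tangent01 : half_tangent (Eset D phi [set 0; 1]) xhat d01)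
  (tangent12 : half_tangent (Eset D phi [set 1; 2]) xhat d12)
  (tangent02 : half_tangent (Eset D phi [set 0; 2]) xhat d02).

Let L1 := 'd (phi 1) xhat.
Let L2 := 'd (phi 2) xhat.
Let phi1_triple := Eset_triple_eq0 phi_cont phi0 1 triple.
Let phi2_triple := Eset_triple_eq0 phi_cont phi0 2 triple.

Lemma diff1_tangent01 : L1 d01 = 0.
Proof.
apply: (half_tangent_diff_eq0 (phi_diff 1) tangent01) => y /(Eset01_phi phi_cont phi0).
by rewrite phi1_triple => -[].
Qed.

Lemma diff2_tangent01_ge0 : 0 <= L2 d01.
Proof.
apply: (half_tangent_diff_ge0 (phi_diff 2) tangent01) => y /(Eset01_phi phi_cont phi0).
by rewrite phi2_triple => -[].
Qed.

Lemma diff2_tangent02 : L2 d02 = 0.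
Proof.
apply: (half_tangent_diff_eq0 (phi_diff 2) tangent02) => y /(Eset02_phi phi_cont phi0).
by rewrite phi2_triple => -[].
Qed.

Lemma diff1_tangent02_ge0 : 0 <= L1 d02.
Proof.
apply: (half_tangent_diff_ge0 (phi_diff 1) tangent02) => y /(Eset02_phi phi_cont phi0).
by rewrite phi1_triple => -[].
Qed.

Lemma diff1_tangent12_le0 : L1 d12 <= 0.
Proof.
apply: (half_tangent_diff_le0 (phi_diff 1) tangent12) => y /(Eset12_phi phi_cont phi0).
by rewrite phi1_triple => -[].
Qed.

Lemma diff_tangent12 : L1 d12 = L2 d12.
Proof.
apply/eqP; rewrite -subr_eq0 -[_ - _]/('d (phi 1) xhat d12 - 'd (phi 2) xhat d12).
rewrite -[_ - _](congr1 (fun g => g d12) (diffB (phi_diff 1) (phi_diff 2))).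
apply/eqP; apply: (half_tangent_diff_eq0 _ tangent12).
  exact: differentiableB.
move=> y /(Eset12_phi phi_cont phi0) [eq12 _].
by rewrite !fctE eq12 phi1_triple phi2_triple !subrr.
Qed.

Hypothesis diff_phihat_bij : bijective ('d (phihat phi) xhat).

Lemma diff_phihat v : 'd (phihat phi) xhat v = (- L1 v, - L2 v).
Proof.
have -> : phihat phi = (fun y => ((- phi 1) y, (- phi 2) y)).
  by apply/funext => y; rewrite /phihat phi0 !sub0r.
rewrite (diff_pair (differentiableN (phi_diff 1)) (differentiableN (phi_diff 2))).
have diffN_at k : 'd (- phi k) xhat v = - 'd (phi k) xhat v.
  exact: (congr1 (fun g => g v) (diffN (phi_diff k))).
exact: (f_equal2 pair (diffN_at 1) (diffN_at 2)).
Qed.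

Lemma diff_kernel {v} : L1 v = 0 -> L2 v = 0 -> v = 0.
Proof.
move=> L1v L2v; apply: (bij_inj diff_phihat_bij).
by rewrite linear0 diff_phihat L1v L2v oppr0.
Qed.

Lemma diff2_tangent01_gt0 : 0 < L2 d01.
Proof.
rewrite lt_neqAle diff2_tangent01_ge0 andbT eq_sym.
apply: contra_neq (half_tangent_neq0 tangent01).
exact: diff_kernel diff1_tangent01.
Qed.

Lemma diff1_tangent02_gt0 : 0 < L1 d02.
Proof.
rewrite lt_neqAle diff1_tangent02_ge0 andbT eq_sym.
apply: contra_neq (half_tangent_neq0 tangent02) => L1d.
exact: diff_kernel L1d diff2_tangent02.
Qed.

Lemma diff1_tangent12_lt0 : L1 d12 < 0.
Proof.
rewrite lt_neqAle diff1_tangent12_le0 andbT.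
apply: contra_neq (half_tangent_neq0 tangent12) => L1d.
by apply: (diff_kernel L1d); rewrite -diff_tangent12.
Qed.

Let det := linear_det L1 L2.

Lemma det_cross_tangents_gt0 :
  [/\ 0 < det * cross d02 d01, 0 < det * cross d01 d12 & 0 < det * cross d12 d02].
Proof.
have signs (a1 a2 b1 b2 c1 c2 : R) :
    a1 = 0 -> 0 < a2 -> b2 = 0 -> 0 < b1 -> c1 = c2 -> c1 < 0 ->
    [/\ 0 < b1 * a2 - a1 * b2, 0 < a1 * c2 - c1 * a2 & 0 < c1 * b2 - b1 * c2].
  move=> -> a2_gt0 -> b1_gt0 <- c1_lt0.
  rewrite !(mul0r, mulr0, subr0, sub0r, oppr_gt0).
  by rewrite mulr_gt0 // nmulr_rlt0 // pmulr_rlt0.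
rewrite -!linear_cross.
exact: signs diff1_tangent01 diff2_tangent01_gt0 diff2_tangent02
  diff1_tangent02_gt0 diff_tangent12 diff1_tangent12_lt0.
Qed.

End TriplePoint.

Section SectorAngles.
Context {R : realType}.

Definition sector_angles_in_0pi (th0 th1 : R) : Prop :=
  let t0 := Num.min th0 th1 in
  let t1 := Num.max th0 th1 in
  let beta0 := t0 in
  let beta1 := t1 - t0 in
  let beta2 := 2 * pi - t1 in
  Num.max beta0 (Num.max beta1 beta2) < pi /\
  0 < Num.min beta0 (Num.min beta1 beta2).

Lemma sector_angles_in_0piC (th0 th1 : R) :
  sector_angles_in_0pi th0 th1 = sector_angles_in_0pi th1 th0.
Proof. by rewrite /sector_angles_in_0pi [Num.min th0 th1]minC [Num.max th0 th1]maxC. Qed.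

Lemma sin_gt0_angle {x : R} : 0 <= x < 2 * pi -> 0 < sin x -> 0 < x < pi.
Proof.
move=> /andP[x_ge0 x_lt2pi] sin_gt0; have pi_gt0 := pi_gt0 R.
have [x_ltpi|x_gepi] := ltP x pi.
  apply/andP; split=> //; rewrite lt_neqAle x_ge0 andbT eq_sym.
  by apply: contraTneq sin_gt0 => ->; rewrite sin0 ltxx.
have : 0 <= sin (x - pi) by apply: sin_ge0_pi; apply/andP; split; lra.
by rewrite -[x in sin x](subrK pi) sinDpi in sin_gt0; lra.
Qed.

Lemma sin_lt0_angle {x : R} : 0 <= x -> sin x < 0 -> pi < x.
Proof.
move=> x_ge0 sin_lt0; rewrite ltNge; apply: contraTN sin_lt0 => x_lepi.
by rewrite -leNgt sin_ge0_pi // x_ge0.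
Qed.

Lemma sector_angles_sin (th0 th1 : R) : 0 <= th0 < 2 * pi -> 0 <= th1 < 2 * pi ->
  0 < sin th0 -> 0 < sin (th1 - th0) -> sin th1 < 0 ->
  sector_angles_in_0pi th0 th1.
Proof.
move=> th0_range th1_range sin0_gt0 sin10_gt0 sin1_lt0.
have /andP[th0_gt0 th0_ltpi] := sin_gt0_angle th0_range sin0_gt0.
have th1_gtpi := sin_lt0_angle (proj1 (andP th1_range)) sin1_lt0.
have /andP[_ th1_lt2pi] := th1_range.
have /andP[_ th10_ltpi] : 0 < th1 - th0 < pi.
  by apply: sin_gt0_angle sin10_gt0; apply/andP; split; lra.
rewrite /sector_angles_in_0pi /=.
have -> : Num.min th0 th1 = th0 by apply/min_idPl; lra.
have -> : Num.max th0 th1 = th1 by apply/max_idPr; lra.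
by rewrite !gt_max !lt_min; split; repeat (apply/andP; split); lra.
Qed.

Lemma sector_angles_sign (c th0 th1 : R) : 0 <= th0 < 2 * pi -> 0 <= th1 < 2 * pi ->
  0 < c * sin th0 -> 0 < c * sin (th1 - th0) -> 0 < c * - sin th1 ->
  sector_angles_in_0pi th0 th1.
Proof.
move=> th0_range th1_range s0 s10 s1.
have [c_lt0|c_gt0|c_eq0] := ltrgtP c 0; last by rewrite c_eq0 mul0r ltxx in s0.
- rewrite sector_angles_in_0piC; apply: sector_angles_sin => //.
  + by rewrite -oppr_lt0 -(nmulr_rgt0 _ c_lt0).
  + by rewrite -opprB sinN oppr_gt0 -(nmulr_rgt0 _ c_lt0).
  + by rewrite -(nmulr_rgt0 _ c_lt0).
- apply: sector_angles_sin => //.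
  + by rewrite -(pmulr_rgt0 _ c_gt0).
  + by rewrite -(pmulr_rgt0 _ c_gt0).
  + by rewrite -oppr_gt0 -(pmulr_rgt0 _ c_gt0).
Qed.

End SectorAngles.

Theorem theorem5p1 (R : realType) (D : set (R * R)) (phi : 'I_3 -> R * R -> R)
  (xhat d01 d12 d02 : R * R) (th0 th1 : R) :
  open D -> bounded_set D ->
  (forall k : 'I_3, smooth (phi k)) ->
  phi 0 = (fun _ => 0) ->
  Eset D phi setT xhat ->
  bijective ('d (phihat phi) xhat) ->
  half_tangent (Eset D phi [set 0; 1]) xhat d01 ->
  half_tangent (Eset D phi [set 1; 2]) xhat d12 ->
  half_tangent (Eset D phi [set 0; 2]) xhat d02 ->
  ccw_angle d02 d01 th0 ->
  ccw_angle d02 d12 th1 ->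
  let t0 := Num.min th0 th1 in
  let t1 := Num.max th0 th1 in
  let beta0 := t0 in
  let beta1 := t1 - t0 in
  let beta2 := 2 * pi - t1 in
  Num.max beta0 (Num.max beta1 beta2) < pi /\
  0 < Num.min beta0 (Num.min beta1 beta2).
Proof.
move=> _ _ phi_smooth phi0 triple bij tangent01 tangent12 tangent02 angle0 angle1.
have phi_cont k : continuous (phi k) := phi_smooth k 0%N.
have phi_diff k : differentiable (phi k) xhat := (phi_smooth k 1%N).1 xhat.
have [cross0 cross10 cross1] :=
  det_cross_tangents_gt0 phi_cont phi_diff phi0 triple tangent01 tangent12 tangent02 bij.
have unit02 := half_tangent_unit tangent02.
rewrite (cross_ccw_angle (ccw_angle0 _) angle0) unit02 mulr1 subr0 in cross0.
rewrite (cross_ccw_angle angle0 angle1) unit02 mulr1 in cross10.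
rewrite (cross_ccw_angle angle1 (ccw_angle0 _)) unit02 mulr1 sub0r sinN in cross1.
exact: sector_angles_sign angle0.1 angle1.1 cross0 cross10 cross1.
Qed.
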